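(* Let $A_1$ and $A_2$ be finite-dimensional simple evolution algebras over a field $\mathbb{K}$. If $\dim\mathfrak{Diag}(A_i)>0$ for some $i\in\{1,2\}$, then $A_1\otimes A_2$ is a simple evolution algebra.
   Context: An evolution algebra over $\mathbb{K}$ is a $\mathbb{K}$-algebra with a basis $B=\{e_1,\dots,e_n\}$ (natural basis) such that $e_ie_j=0$ for $i\ne j$. A $\mathbb{K}$-algebra is simple if $A^2\neq 0$ and its only ideals are $0$ and $A$. For a simple finite-dimensional evolution algebra, any two natural bases agree up to reordering and nonzero rescaling of their elements; the diagonal subspace is $\mathfrak{Diag}(A):=\sum_{e\in B}(eA)e$ for a natural basis $B$, independent of this choice. The tensor product $A_1\otimes A_2$ of evolution algebras with natural bases $\{a_i\}$, $\{b_p\}$ is the evolution algebra with natural basis $\{a_i\otimes b_p\}$ and product $(a\otimes b)(a'\otimes b')=aa'\otimes bb'$. *)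

From mathcomp Require Import all_boot all_order all_algebra.
From mathcomp Require Export mxtens.
Set Implicit Arguments. Unset Strict Implicit. Unset Printing Implicit Defensive.
Import GRing.Theory.
Local Open Scope ring_scope.

(* An n-dimensional evolution algebra over K, given with its natural basis
   e_0,...,e_{n-1}, is encoded by its structure matrix C:
      e_i e_i = \sum_k C i k e_k,   e_i e_j = 0 (i <> j).
   Carrier: row vectors 'rV[K]_n (coordinates in the natural basis). *)

Section Evo.
Variables (K : fieldType) (n : nat).

Definition evbasis (i : 'I_n) : 'rV[K]_n := delta_mx 0 i.

(* the product: (sum x_i e_i)(sum y_j e_j) = sum_i x_i y_i e_i^2 *)
Definition evmul (C : 'M[K]_n) (x y : 'rV[K]_n) : 'rV[K]_n :=
  \row_k \sum_i x 0 i * y 0 i * C i k.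

Definition evprodv (C : 'M[K]_n) (U V : {vspace 'rV[K]_n}) : {vspace 'rV[K]_n} :=
  <<[seq evmul C u v | u <- vbasis U, v <- vbasis V]>>%VS.

Definition ev_ideal (C : 'M[K]_n) (I : {vspace 'rV[K]_n}) : Prop :=
  forall x y, x \in I -> evmul C x y \in I /\ evmul C y x \in I.

Definition ev_simple (C : 'M[K]_n) : Prop :=
  (evprodv C fullv fullv != 0%VS) /\
  forall I, ev_ideal C I -> I = 0%VS \/ I = fullv.

Definition ev_diag (C : 'M[K]_n) : {vspace 'rV[K]_n} :=
  (\sum_(i < n) evprodv C (evprodv C <[evbasis i]> fullv) <[evbasis i]>)%VS.

End Evo.

(* tensor product: natural basis a_i (x) b_p indexed by mxtens_index (i, p);
   (a_i (x) b_p)^2 = a_i^2 (x) b_p^2 = \sum_{j,q} C1 i j C2 p q (a_j (x) b_q),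
   i.e. the structure matrix is the Kronecker product C1 *t C2 (tensmxE). *)
Definition ev_tensor (K : fieldType) (n m : nat) (C1 : 'M[K]_n) (C2 : 'M[K]_m)
  : 'M[K]_(n * m) := tensmx C1 C2.

From mathcomp Require Import all_boot all_order all_algebra.
Set Implicit Arguments. Unset Strict Implicit. Unset Printing Implicit Defensive.
Import GRing.Theory.
Local Open Scope ring_scope.

(* Let G(C) be the directed graph on the natural basis with an edge i -> j when
   C i j <> 0.  A finite-dimensional evolution algebra is simple iff it is
   nonzero, its structure matrix C is invertible (i.e. A^2 = A) and G(C) is
   strongly connected.  The structure matrix of A1 (x) A2 is the Kronecker
   product C1 *t C2, which is invertible, and there is an edge
   (i, p) -> (j, q) iff there are edges i -> j and p -> q; so (i, p) reaches
   (j, q) as soon as G(C1) and G(C2) have walks i ~> j and p ~> q of the SAME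
   length.  A nonzero diagonal subspace means that some G(C_i) has a loop; a
   strongly connected graph with a loop has walks of every large enough
   length between any two vertices, while the other graph, in which every
   vertex has an out-edge, has walks of unboundedly large length. *)

Section Walks.
Variables (T : Type) (e : rel T).

Fixpoint walk (k : nat) (x y : T) : Prop :=
  if k is k'.+1 then exists2 z, e x z & walk k' z y else x = y.

Lemma walk_cat k1 k2 x y z : walk k1 x y -> walk k2 y z -> walk (k1 + k2) x z.
Proof.
elim: k1 x => [|k1 IH] x /=; first by move=> ->.
by case=> x' exx' wx'y wyz; exists x' => //; apply: IH wyz.
Qed.

Lemma walk_loop x k : e x x -> walk k x x.
Proof. by move=> exx; elim: k => [|k IH] //=; exists x. Qed.

Lemma walk_closed (P : T -> Prop) k x y :
  (forall a b, P a -> e a b -> P b) -> P x -> walk k x y -> P y.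
Proof.
move=> closedP; elim: k x => [|k IH] x Px /=; first by move=> <-.
by case=> z exz wzy; apply: IH wzy; apply: closedP exz.
Qed.

End Walks.

Section FiniteWalks.
Variables (T : finType) (e : rel T).

Lemma connect_walk x y : connect e x y <-> exists k, walk e k x y.
Proof.
split=> [/connectP [p]|[k]].
  elim: p x => [|z p IH] x /=; first by exists 0%N.
  by case/andP=> exz /IH pzy /pzy [k wzy]; exists k.+1; exists z.
elim: k x => [|k IH] x /=; first by move=> ->.
by case=> z exz /IH; apply: connect_trans; apply: connect1.
Qed.

Hypothesis e_connected : forall x y, connect e x y.

Lemma walk_eventually z : e z z ->
  forall x y, exists L, forall k, (L <= k)%N -> walk e k x y.
Proof.
move=> ezz x y.
have [a wxz] := (connect_walk x z).1 (e_connected x z).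
have [b wzy] := (connect_walk z y).1 (e_connected z y).
exists (a + b)%N => k ab_le_k.
have -> : k = (a + (b + (k - (a + b))))%N by rewrite addnA subnKC.
by apply: walk_cat wxz _; rewrite addnC; apply: walk_cat (walk_loop _ ezz) wzy.
Qed.

Lemma walk_unbounded : (forall x, exists y, e x y) ->
  forall x y L, exists2 k, (L <= k)%N & walk e k x y.
Proof.
move=> out x y L; have [z eyz] := out y.
have [a wxy] := (connect_walk x y).1 (e_connected x y).
have [c wzy] := (connect_walk z y).1 (e_connected z y).
have cycle_y : walk e c.+1 y y by exists z.
have wxy_t t : walk e (a + t * c.+1) x y.
  elim: t => [|t IH]; first by rewrite mul0n addn0.
  by rewrite mulSn addnCA addnC; apply: walk_cat IH cycle_y.
exists (a + L * c.+1)%N => //.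
by apply: leq_trans (leq_addl _ _); rewrite leq_pmulr.
Qed.

End FiniteWalks.

Lemma walk_sync (T1 T2 : finType) (e1 : rel T1) (e2 : rel T2) :
  (forall x y, connect e1 x y) -> (forall x y, connect e2 x y) ->
  (forall x, exists y, e1 x y) -> (forall x, exists y, e2 x y) ->
  (exists z, e1 z z) \/ (exists z, e2 z z) ->
  forall x1 y1 x2 y2, exists k, walk e1 k x1 y1 /\ walk e2 k x2 y2.
Proof.
move=> conn1 conn2 out1 out2 [[z ezz]|[z ezz]] x1 y1 x2 y2.
- have [L long1] := walk_eventually conn1 ezz x1 y1.
  have [k L_le_k w2] := walk_unbounded conn2 out2 x2 y2 L.
  by exists k; split => //; apply: long1.
- have [L long2] := walk_eventually conn2 ezz x2 y2.
  have [k L_le_k w1] := walk_unbounded conn1 out1 x1 y1 L.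
  by exists k; split => //; apply: long2.
Qed.

Section EvolutionAlgebra.
Variables (K : fieldType) (N : nat).
Implicit Types (C : 'M[K]_N) (x y : 'rV[K]_N) (U V W : {vspace 'rV[K]_N}).

Lemma evmulE C x y : evmul C x y = \row_i (x 0 i * y 0 i) *m C.
Proof. by apply/rowP => k; rewrite !mxE; apply: eq_bigr => i _; rewrite mxE. Qed.

Lemma evmulC C x y : evmul C x y = evmul C y x.
Proof. by apply/rowP => k; rewrite !mxE; apply: eq_bigr => i _; rewrite (mulrC (x 0 i)). Qed.

Lemma evmul_mulmx C x y : evmul C x y = x *m (diag_mx y *m C).
Proof.
rewrite evmulE mulmxA; congr (_ *m _); apply/rowP => i.
by rewrite mul_mx_diag !mxE.
Qed.

Lemma evmulZl C a x y : evmul C (a *: x) y = a *: evmul C x y.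
Proof. by rewrite !evmul_mulmx scalemxAl. Qed.

Lemma evmul_basis C x k : evmul C x (evbasis K k) = x 0 k *: row k C.
Proof.
rewrite evmulE rowE scalemxAl; congr (_ *m _); apply/rowP => i.
rewrite !mxE; case: (eqVneq k i) => [->|ne]; first by rewrite eqxx mulr1.
by rewrite andbF !mulr0.
Qed.

Lemma mem_evprodv C U V u v :
  u \in U -> v \in V -> evmul C u v \in evprodv C U V.
Proof.
move=> uU vV; rewrite (coord_vbasis uU) (coord_vbasis vV).
rewrite evmul_mulmx mulmx_suml; apply: memv_suml => i _.
rewrite -scalemxAl memvZ // -evmul_mulmx evmulC evmul_mulmx mulmx_suml.
apply: memv_suml => j _; rewrite -scalemxAl memvZ // -evmul_mulmx evmulC.
by apply/memv_span/allpairs_f; apply: mem_nth; rewrite size_tuple.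
Qed.

Lemma evprodv_sub C U V W :
  (forall u v, u \in U -> v \in V -> evmul C u v \in W) ->
  (evprodv C U V <= W)%VS.
Proof.
move=> UVW; apply/span_subvP => w /allpairsP [[u v] [/= uU vV ->]].
by apply: UVW; apply: vbasis_mem.
Qed.

Definition ev_edge C : rel 'I_N := fun i j => C i j != 0.

Definition supportv (P : pred 'I_N) : {vspace 'rV[K]_N} :=
  lker (linfun (mulmxr (diag_mx (\row_k ((~~ P k)%:R : K))))).

Lemma supportvP (P : pred 'I_N) x :
  reflect (forall k, ~~ P k -> x 0 k = 0) (x \in supportv P).
Proof.
rewrite memv_ker lfunE /= mul_mx_diag.
apply: (iffP eqP) => [x0 k Pk|x0].
  by move/rowP: x0 => /(_ k); rewrite !mxE Pk mulr1.
apply/rowP => k; rewrite !mxE; case Pk: (P k); first by rewrite mulr0.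
by rewrite x0 ?Pk // mul0r.
Qed.

Lemma unitmx_row_neq0 C k : C \in unitmx -> row k C != 0.
Proof.
move=> Cu; apply: contraTneq isT => rowk0.
have : 'e_k = 0 :> 'rV[K]_N by rewrite -(mulmxK Cu 'e_k) -rowE rowk0 mul0mx.
by move/rowP/(_ k); rewrite !mxE !eqxx => /eqP; rewrite oner_eq0.
Qed.

Lemma unitmx_out_edge C : C \in unitmx -> forall i, exists j, ev_edge C i j.
Proof.
move=> Cu i; have /existsP [j Cij] : [exists j, C i j != 0].
  apply: contraR (unitmx_row_neq0 i Cu) => /existsPn Ci0.
  by apply/eqP/rowP => j; rewrite !mxE; apply/eqP; rewrite -[_ == 0]negbK Ci0.
by exists j.
Qed.

Lemma ev_simple_gt0 C : ev_simple C -> (0 < N)%N.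
Proof.
case=> A2_neq0 _; rewrite -dimv_eq0 -lt0n in A2_neq0.
by have := leq_trans A2_neq0 (dimvS (subvf _)); rewrite dimvf /dim /= mul1n.
Qed.

(* The image of C is the ideal A^2, so simplicity forces A^2 = A. *)
Lemma ev_simple_unitmx C : ev_simple C -> C \in unitmx.
Proof.
move=> [A2_neq0 simple_ideals].
pose A2 : {vspace 'rV[K]_N} := limg (linfun (mulmxr C)).
have A2_evmul x y : evmul C x y \in A2.
  by apply/memv_imgP; exists (\row_i (x 0 i * y 0 i)); rewrite ?memvf ?lfunE ?evmulE.
have [A2_0|A2_full] : A2 = 0%VS \/ A2 = fullv.
  by apply: simple_ideals => x y _; rewrite !A2_evmul.
  case/negP: A2_neq0; rewrite -subv0 -A2_0.
  by apply: evprodv_sub => u v _ _; apply: A2_evmul.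
have /fin_all_exists [B BC] : forall k, exists u : 'rV[K]_N, u *m C = 'e_k.
  move=> k; have /memv_imgP [u _ ->] : 'e_k \in A2 by rewrite A2_full memvf.
  by exists u; rewrite lfunE.
suff /mulmx1_unit [] : \matrix_k B k *m C = 1%:M by [].
by apply/row_matrixP => k; rewrite row_mul rowK row1 BC.
Qed.

(* The vectors supported on the vertices reachable from i form a nonzero ideal. *)
Lemma ev_simple_connect C : ev_simple C -> forall i j, connect (ev_edge C) i j.
Proof.
move=> [_ simple_ideals] i j.
pose J := supportv (connect (ev_edge C) i).
have basis_J l : connect (ev_edge C) i l -> 'e_l \in J.
  move=> il; apply/supportvP => k; rewrite mxE.
  by case: (eqVneq l k) => [<-|]; rewrite ?il ?andbF.
have evmul_J x y : x \in J -> evmul C x y \in J.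
  move/supportvP=> xJ; apply/supportvP => k ik; rewrite mxE big1 // => l _.
  have [il|il] := boolP (connect (ev_edge C) i l); last by rewrite xJ // !mul0r.
  have [Clk0|Clk] := eqVneq (C l k) 0; first by rewrite Clk0 mulr0.
  by case/negP: ik; apply: connect_trans il (connect1 Clk).
have [J0|J_full] : J = 0%VS \/ J = fullv.
- by apply: simple_ideals => x y xJ; split; [|rewrite evmulC]; apply: evmul_J.
- have := basis_J i (connect0 _ _); rewrite J0 memv0 => /eqP/rowP/(_ i).
  by rewrite !mxE !eqxx => /eqP; rewrite oner_eq0.
- have /supportvP ej_J : 'e_j \in J by rewrite J_full memvf.
  apply: contraT => ij; have := ej_J j ij.
  by rewrite !mxE !eqxx => /eqP; rewrite oner_eq0.
Qed.

(* A nonzero ideal I contains x e_k = x_k e_k^2 = x_k (row k C) for some k; the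
   same step puts row l C in I along every edge k -> l, and the rows of an
   invertible C span A. *)
Lemma ev_simple_of_connect C : (0 < N)%N -> C \in unitmx ->
  (forall i j, connect (ev_edge C) i j) -> ev_simple C.
Proof.
move=> N_gt0 Cu Cconn.
have ideal_row I y l : ev_ideal C I -> y \in I -> y 0 l != 0 -> row l C \in I.
  move=> idI yI yl; have := (idI y (evbasis K l) yI).1.
  by rewrite evmul_basis -{2}(scalerK yl (row l C)) => /memvZ ->.
split.
  pose k := Ordinal N_gt0; apply: contraNneq (unitmx_row_neq0 k Cu) => A2_0.
  have := mem_evprodv C (memvf (evbasis K k)) (memvf (evbasis K k)).
  by rewrite A2_0 memv0 evmul_basis mxE !eqxx scale1r.
move=> I idI; have [->|I_neq0] := eqVneq I 0%VS; [by left | right].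
have /existsP [k xk] : [exists k, vpick I 0 k != 0].
  apply: contraR I_neq0 => /existsPn x0; rewrite -vpick0; apply/eqP/rowP => k.
  by rewrite mxE; apply/eqP; rewrite -[_ == 0]negbK x0.
have rowsI l : row l C \in I.
  have /connect_walk [t wkl] := Cconn k l.
  apply: (walk_closed (P := fun a => row a C \in I)) wkl.
    by move=> a b aI Cab; apply: ideal_row idI aI _; rewrite mxE.
  exact: ideal_row idI (memv_pick I) xk.
apply/vspaceP => v; rewrite memvf -[v](mulmxKV Cu) mulmx_sum_row.
by apply: memv_suml => l _; rewrite memvZ.
Qed.

Lemma ev_simpleP C :
  ev_simple C <->
  [/\ (0 < N)%N, C \in unitmx & forall i j, connect (ev_edge C) i j].
Proof.
split=> [simpleC | [N_gt0 Cu Cconn]]; last exact: ev_simple_of_connect.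
split; [exact: ev_simple_gt0 simpleC | exact: ev_simple_unitmx simpleC |
        exact: ev_simple_connect simpleC].
Qed.

(* e_i A lies on the line of e_i^2 = row i C, and (row i C) e_i = C i i e_i^2. *)
Lemma ev_diag_loop C : (0 < \dim (ev_diag C))%N -> exists i, ev_edge C i i.
Proof.
move=> diag_gt0; have /existsP [i Cii] : [exists i, C i i != 0].
  apply: contraTT diag_gt0 => /existsPn noloop; rewrite -leqNgt leqn0 dimv_eq0.
  apply/eqP; rewrite /ev_diag big1 // => i _; apply/eqP; rewrite -subv0.
  have eiA : (evprodv C <[evbasis K i]> fullv <= <[row i C]>)%VS.
    apply: evprodv_sub => a b /vlineP [c ->] _.
    by rewrite evmulZl evmulC evmul_basis !memvZ // memv_line.
  apply: evprodv_sub => u v /(subvP eiA) /vlineP [a ->] /vlineP [c ->].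
  rewrite evmulZl evmulC evmulZl evmulC evmul_basis mxE.
  by move/negPn/eqP: (noloop i) ->; rewrite scale0r !scaler0 mem0v.
by exists i.
Qed.

End EvolutionAlgebra.

Lemma tensmx_walk (K : fieldType) (n m : nat) (C1 : 'M[K]_n) (C2 : 'M[K]_m)
    k i j p q :
  walk (ev_edge C1) k i j -> walk (ev_edge C2) k p q ->
  walk (ev_edge (ev_tensor C1 C2)) k (mxtens_index (i, p)) (mxtens_index (j, q)).
Proof.
elim: k i p => [|k IH] i p /=; first by move=> -> ->.
case=> i' C1ii' wi'j [p' C2pp' wp'q]; exists (mxtens_index (i', p')).
  by rewrite /ev_edge /ev_tensor tensmxE mulf_neq0.
exact: IH.
Qed.

Theorem corollary4p4 (K : fieldType) (n m : nat)
  (C1 : 'M[K]_n) (C2 : 'M[K]_m) :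
  ev_simple C1 -> ev_simple C2 ->
  (0 < \dim (ev_diag C1) \/ 0 < \dim (ev_diag C2))%N ->
  ev_simple (ev_tensor C1 C2).
Proof.
move=> /ev_simpleP [n_gt0 C1u C1conn] /ev_simpleP [m_gt0 C2u C2conn] diag.
have loop : (exists i, ev_edge C1 i i) \/ (exists p, ev_edge C2 p p).
  by case: diag => /ev_diag_loop; [left | right].
apply/ev_simpleP; split.
- by rewrite muln_gt0 n_gt0.
- by apply: tensmx_unit; rewrite // -lt0n.
- move=> a b; case: (mxtens_indexP a) => i p; case: (mxtens_indexP b) => j q.
  have [k [wij wpq]] := walk_sync C1conn C2conn
    (unitmx_out_edge C1u) (unitmx_out_edge C2u) loop i j p q.
  by apply/connect_walk; exists k; apply: tensmx_walk.
Qed.
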